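(* Let $\mathcal A$ be a category of cubes. There is an isomorphism $\mathrm{sh}_\mathcal{A}\mathcal{L}_\mathcal{A}(!\{\tau\})\cong\mathbf{1}$, where $\mathbf 1$ is the terminal $\mathcal A$-set. Therefore, when $\Sigma=\{\tau\}$, the category of labelled $\mathcal{A}$-sets is equivalent to the category of unlabelled $\mathcal{A}$-sets.
   Context: $[0]=\{()\}$, $[n]=\{0,1\}^n$ ($n\ge1$) with the product order; ${\rm PoSet}$: posets with strictly increasing maps. Face maps $\delta_i^\alpha:[n-1]\to[n]$ insert $\alpha$ at position $i$; $\square$ is the subcategory of ${\rm PoSet}$ with objects $[n]$ generated by face maps; its presheaves are precubical sets. A map is adjacency-preserving if strictly increasing and it sends pairs at Hamming distance $1$ to pairs at Hamming distance $1$. A category of cubes is a subcategory $\mathcal A\subset{\rm PoSet}$ with objects $\{[n]:n\ge0\}$, containing $\square$, with all morphisms adjacency-preserving. $\mathcal A$-sets are presheaves on $\mathcal A$; $\mathcal A[p]=\mathcal A(-,[p])$, $\partial\mathcal A[p]$ its subpresheaf of cubes of dimension $<p$. $\mathcal L_\mathcal A$ is the left adjoint of restriction along $\square\subset\mathcal A$. For a set $\Sigma$, $!\Sigma$ is the precubical set with $(!\Sigma)_0=\{()\}$, $(!\Sigma)_n=\Sigma^n$, $\partial_i^0=\partial_i^1$ deleting the $i$-th letter. $\mathrm{sh}_\mathcal A$ is left adjoint to the inclusion of the full subcategory of $\mathcal A$-sets orthogonal to the maps $\mathcal A[p]\sqcup_{\partial\mathcal A[p]}\mathcal A[p]\to\mathcal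 A[p]$, $p\ge2$. A labelled $\mathcal A$-set (over $\Sigma$) is an object of the slice category of $\mathcal A$-sets over $\mathrm{sh}_\mathcal A\mathcal L_\mathcal A(!\Sigma)$. *)

From HB Require Import structures.
From mathcomp Require Import all_boot zify.
Set Implicit Arguments. Unset Strict Implicit. Unset Printing Implicit Defensive.

(* [n] is represented by n.-tuple bool ([0] = the one-element 0-tuple).   *)
Definition cube (n : nat) : finType := n.-tuple bool.

Definition cle n (x y : cube n) : bool := [forall i, tnth x i ==> tnth y i].
Definition clt n (x y : cube n) : bool := (x != y) && cle x y.

Definition hamming n (x y : cube n) : nat := #|[set i | tnth x i != tnth y i]|.

(* maps [m] -> [n] (as finite functions, so equality is decidable) *)
Definition Hom (m n : nat) : finType := {ffun cube m -> cube n}.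
Definition idH n : Hom n n := [ffun x => x].
Definition compH l m n (g : Hom m n) (f : Hom l m) : Hom l n := [ffun x => g (f x)].

Definition strictly_increasing m n (f : Hom m n) : Prop :=
  forall x y, clt x y -> clt (f x) (f y).
Definition adjacency_preserving m n (f : Hom m n) : Prop :=
  strictly_increasing f /\ forall x y, hamming x y = 1 -> hamming (f x) (f y) = 1.

(* face map delta_i^a : [n] -> [n+1], inserting a at position i
   (positions are 0-indexed here: i ranges over 0..n) *)
Lemma size_ins n (x : n.-tuple bool) (i : 'I_n.+1) (a : bool) :
  size (take i x ++ a :: drop i x) == n.+1.
Proof.
rewrite size_cat /= size_take size_drop size_tuple.
case: i => i /= Hi.
by apply/eqP; case: ltnP => H; lia.
Qed.

Definition face n (i : 'I_n.+1) (a : bool) : Hom n n.+1 :=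
  [ffun x : cube n => Tuple (size_ins x i a)].

Inductive box : forall m n, Hom m n -> Prop :=
| box_id n : box (idH n)
| box_face m n (f : Hom m n) (i : 'I_n.+1) (a : bool) :
    box f -> box (compH (face i a) f).

Record cube_cat := CubeCat {
  Amor : forall m n, {set Hom m n};
  Amor_id : forall n, idH n \in Amor n n;
  Amor_comp : forall l m n (g : Hom m n) (f : Hom l m),
      g \in Amor m n -> f \in Amor l m -> compH g f \in Amor l n;
  Amor_face : forall n (i : 'I_n.+1) (a : bool), face i a \in Amor n n.+1;
  Amor_adj : forall m n (f : Hom m n), f \in Amor m n -> adjacency_preserving f
}.

Definition Apred (A : cube_cat) : forall m n, Hom m n -> Prop :=
  fun m n f => f \in Amor A m n.

Lemma box_sub (A : cube_cat) m n (f : Hom m n) : box f -> Apred A f.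
Proof.
elim=> [k|k l g i a _ IH]; first exact: Amor_id.
by apply: Amor_comp => //; apply: Amor_face.
Qed.

Record psh (C : forall m n, Hom m n -> Prop) := Psh {
  ob :> nat -> Type;
  act : forall m n (f : Hom m n), C m n f -> ob n -> ob m;
  act_id : forall n (p : C n n (idH n)) (x : ob n), act p x = x;
  act_comp : forall l m n (f : Hom l m) (g : Hom m n)
      (pf : C l m f) (pg : C m n g) (pgf : C l n (compH g f)) (x : ob n),
      act pgf x = act pf (act pg x)
}.
Arguments act {C} p0 {m n f} _ _.

Record psh_hom C (X Y : psh C) := PshHom {
  hcomp :> forall n, X n -> Y n;
  hnat : forall m n (f : Hom m n) (p : C m n f) (x : X n),
      hcomp (act X p x) = act Y p (hcomp x)
}.

Definition hom_eq C (X Y : psh C) (f g : psh_hom X Y) : Prop :=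
  forall n (x : X n), f n x = g n x.

Definition psh_iso C (X Y : psh C) : Prop :=
  exists (f : psh_hom X Y) (g : psh_hom Y X),
    (forall n (x : X n), g n (f n x) = x) /\ (forall n (y : Y n), f n (g n y) = y).

Definition precubical := psh box.
Definition Aset (A : cube_cat) := psh (Apred A).

Definition terminal (A : cube_cat) : Aset A :=
  @Psh (Apred A) (fun _ => unit) (fun _ _ _ _ x => x)
       (fun _ _ _ => erefl) (fun _ _ _ _ _ _ _ _ _ => erefl).

(* (!{tau})_n = {tau}^n; we take tau := tt, Sigma := unit.  Since every
   {tau}^m is a singleton, deleting letters is the unique map. *)
Lemma unit_tuple_eq k (x y : k.-tuple unit) : x = y.
Proof. by apply: eq_from_tnth => i; case: (tnth x i); case: (tnth y i). Qed.

Definition bang_tau_act m n (f : Hom m n) (p : box f) (w : n.-tuple unit)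
  : m.-tuple unit := [tuple of nseq m tt].

Definition bang_tau : precubical :=
  @Psh box (fun n => n.-tuple unit) bang_tau_act
       (fun _ _ _ => unit_tuple_eq _ _)
       (fun _ _ _ _ _ _ _ _ _ => unit_tuple_eq _ _).

(* a morphism of precubical sets X -> (restriction of Z to box) *)
Record res_hom (A : cube_cat) (X : precubical) (Z : Aset A) := ResHom {
  rcomp :> forall n, X n -> Z n;
  rnat : forall m n (f : Hom m n) (p : box f) (x : X n),
      rcomp (act X p x) = act Z (box_sub A p) (rcomp x)
}.

(* eta : X -> res P is a universal arrow, i.e. P = L_A X with unit eta *)
Definition L_universal (A : cube_cat) (X : precubical) (P : Aset A)
    (eta : res_hom X P) : Prop :=
  forall (Z : Aset A) (phi : res_hom X Z),
    (exists psi : psh_hom P Z, forall n (x : X n), psi n (eta n x) = phi n x) /\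
    (forall psi1 psi2 : psh_hom P Z,
        (forall n (x : X n), psi1 n (eta n x) = phi n x) ->
        (forall n (x : X n), psi2 n (eta n x) = phi n x) ->
        hom_eq psi1 psi2).

(* By the Yoneda lemma, a map A[p] ⊔_{∂A[p]} A[p] -> Y is a pair of p-cubes
   x, y of Y with the same restrictions along all f : [k] -> [p] in A, k < p;
   it extends (necessarily uniquely, the fold map being epi) along the fold
   map A[p] ⊔_{∂A[p]} A[p] -> A[p] iff x = y. *)
Definition orthogonal (A : cube_cat) (Y : Aset A) : Prop :=
  forall p, 2 <= p -> forall x y : Y p,
    (forall k (f : Hom k p) (pf : Apred A f), k < p -> act Y pf x = act Y pf y) ->
    x = y.

(* eta : P -> Y is a universal arrow into the orthogonal subcategory,
   i.e. Y = sh_A P with unit eta *)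
Definition sh_universal (A : cube_cat) (P Y : Aset A) (eta : psh_hom P Y) : Prop :=
  orthogonal Y /\
  forall (Z : Aset A), orthogonal Z -> forall phi : psh_hom P Z,
    (exists psi : psh_hom Y Z, forall n (x : P n), psi n (eta n x) = phi n x) /\
    (forall psi1 psi2 : psh_hom Y Z,
        (forall n (x : P n), psi1 n (eta n x) = phi n x) ->
        (forall n (x : P n), psi2 n (eta n x) = phi n x) ->
        hom_eq psi1 psi2).

From mathcomp Require Import all_boot zify.
Set Implicit Arguments. Unset Strict Implicit. Unset Printing Implicit Defensive.

(* Every adjacency-preserving map out of [0] or [1] is a composite of face
   maps, so it already lies in the box category.  For an A-set Y orthogonal to
   the fold maps, a family of cubes y_n in Y_n that is compatible with the face
   maps is therefore compatible with every map of A: by induction on the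
   dimension m of the source, for m >= 2 the two m-cubes to be compared have
   equal boundaries, hence coincide.  In sh L (!{tau}) the images of the unique
   words tau^n form such a family, and the universal properties of L and sh
   force every cube of sh L (!{tau}) to be one of them. *)

Lemma tnth_liftS n (x : cube n.+1) (i : 'I_n) :
  tnth x (lift ord0 i) = tnth (behead_tuple x) i.
Proof.
rewrite tnth_behead; congr tnth; apply: val_inj => /=.
by rewrite /bump /= inordK //; case: i => i /= Hi; lia.
Qed.

Lemma cleS n (x y : cube n.+1) :
  cle x y = (thead x ==> thead y) && cle (behead_tuple x) (behead_tuple y).
Proof.
apply/idP/andP.
- move/forallP=> H; split; first exact: H.
  by apply/forallP=> i; rewrite -!tnth_liftS; apply: H.
- case=> H0 /forallP H; apply/forallP=> i.
  by case: (unliftP ord0 i) => [j ->|->] //; rewrite !tnth_liftS; apply: H.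
Qed.

Lemma hammingS n (x y : cube n.+1) :
  hamming x y = (thead x != thead y) + hamming (behead_tuple x) (behead_tuple y).
Proof.
rewrite /hamming -!sum1_card big_mkcond big_ord_recl /= inE; congr addn.
by rewrite [RHS]big_mkcond; apply: eq_bigr => i _; rewrite !inE !tnth_liftS.
Qed.

Lemma hamming_eq0 n (x y : cube n) : hamming x y = 0 -> x = y.
Proof.
move/eqP; rewrite cards_eq0 => /eqP Hxy.
apply: eq_from_tnth => i; apply/eqP/negP => /negP Hi.
have : i \in [set i | tnth x i != tnth y i] by rewrite inE.
by rewrite Hxy inE.
Qed.

Lemma cle_cube0 (x y : cube 0) : cle x y.
Proof. by apply/forallP => -[]. Qed.

Lemma hamming_cube0 (x y : cube 0) : hamming x y = 0.
Proof. by rewrite /hamming -sum1_card big_mkcond big_ord0. Qed.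

Lemma cube1P (x : cube 1) : x = [tuple false] \/ x = [tuple true].
Proof.
case: x => [[|a [|b s]] Hs] //.
by case: a in Hs *; [right|left]; apply: val_inj.
Qed.

Lemma face0E n a (x : cube n) : val (face ord0 a x) = a :: val x.
Proof. by rewrite /face ffunE /= take0 drop0. Qed.

Lemma face1E n a (x : cube n.+1) y s : val x = y :: s ->
  val (face (inord 1 : 'I_n.+2) a x) = y :: a :: s.
Proof. by move=> Hx; rewrite /face ffunE /= inordK // Hx /= take0 drop0. Qed.

Lemma box_point n (v : cube n) : exists2 d : Hom 0 n, box d & forall x, d x = v.
Proof.
elim: n v => [|n IH] v.
  by exists (idH 0) => [|x]; [exact: box_id | rewrite ffunE (tuple0 x) (tuple0 v)].
have [d bd Hd] := IH (behead_tuple v).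
exists (compH (face ord0 (thead v)) d) => [|x]; first exact: box_face.
by apply: val_inj; rewrite ffunE face0E Hd [in RHS](tuple_eta v).
Qed.

Lemma box_edge_head k (t : k.-tuple bool) :
  exists2 d : Hom 1 k.+1, box d & forall x : cube 1, val (d x) = thead x :: val t.
Proof.
elim: k t => [|k IH] t.
  exists (idH 1) => [|x]; first exact: box_id.
  rewrite tuple0 ffunE /= [in LHS](tuple_eta x) /=.
  by case: x => [[|a [|b s]]].
have [d bd Hd] := IH (behead_tuple t).
exists (compH (face (inord 1) (thead t)) d) => [|x]; first exact: box_face.
by rewrite ffunE (face1E _ (Hd x)) [in RHS](tuple_eta t).
Qed.

Lemma box_edge n (u w : cube n) : cle u w -> hamming u w = 1 ->
  exists2 d : Hom 1 n, box d & d [tuple false] = u /\ d [tuple true] = w.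
Proof.
elim: n u w => [|n IH] u w; first by rewrite hamming_cube0.
rewrite cleS hammingS => /andP[Hhead Htail].
have [Ediff|/negPn/eqP Ehead] := boolP (thead u != thead w); rewrite /= => Hdist.
  have [Hu Hw] : thead u = false /\ thead w = true.
    by move: Hhead Ediff; case: (thead u); case: (thead w).
  have Hbeh : behead_tuple u = behead_tuple w.
    by apply: hamming_eq0; move: Hdist; rewrite add1n => -[].
  have [d bd Hd] := box_edge_head (behead_tuple u).
  exists d => //; split; apply: val_inj; rewrite Hd.
    by rewrite [in RHS](tuple_eta u) Hu.
  by rewrite [in RHS](tuple_eta w) Hw Hbeh.
have [d bd [H0 H1]] := IH _ _ Htail Hdist.
exists (compH (face ord0 (thead u)) d); first exact: box_face.
split; apply: val_inj; rewrite ffunE face0E ?H0 ?H1.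
  by rewrite [in RHS](tuple_eta u).
by rewrite Ehead [in RHS](tuple_eta w).
Qed.

Lemma adjacency_preserving_box m n (f : Hom m n) :
  m <= 1 -> adjacency_preserving f -> box f.
Proof.
case: m f => [|[|//]] f _ [Hinc Hadj].
  have [d bd Hd] := box_point (f [tuple]).
  by have -> : f = d by apply/ffunP => x; rewrite Hd (tuple0 x).
have Hlt : clt [tuple false] [tuple true].
  by apply/andP; split; [apply/eqP => /(congr1 val) | rewrite cleS /= cle_cube0].
have Hh : hamming [tuple false] [tuple true] = 1 by rewrite hammingS hamming_cube0.
have /andP[_ Hc] := Hinc _ _ Hlt.
have [d bd [H0 H1]] := box_edge Hc (Hadj _ _ Hh).
by have -> : f = d by apply/ffunP => x; case: (cube1P x) => ->.
Qed.

Section CategoryOfCubes.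
Variable A : cube_cat.

Definition global_section (Z : Aset A) (z : forall n, Z n) : Prop :=
  forall m n (f : Hom m n) (pf : Apred A f), act Z pf (z n) = z m.

Lemma orthogonal_global_section (Z : Aset A) (z : forall n, Z n) :
  orthogonal Z ->
  (forall m n (f : Hom m n) (p : box f), act Z (box_sub A p) (z n) = z m) ->
  global_section z.
Proof.
move=> HZ zbox; elim/ltn_ind=> m IH n f pf.
have [Hm|Hm] := leqP m 1.
  have bf := adjacency_preserving_box Hm (Amor_adj pf).
  by rewrite (bool_irrelevance pf (box_sub A bf)) zbox.
apply: HZ => // k h ph Hk.
have pfh : Apred A (compH f h) by apply: Amor_comp.
by rewrite -(@act_comp _ Z _ _ _ _ _ ph pf pfh) !IH.
Qed.

Definition id_hom (X : Aset A) : psh_hom X X :=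
  @PshHom _ X X (fun n x => x) (fun _ _ _ _ _ => erefl).

Definition comp_hom (X Y Z : Aset A) (g : psh_hom Y Z) (f : psh_hom X Y) :
  psh_hom X Z :=
  @PshHom _ X Z (fun n x => g n (f n x))
    (fun m n h p x => etrans (congr1 (g m) (hnat f p x)) (hnat g p (f n x))).

Definition comp_res_hom (X : precubical) (P Z : Aset A)
    (g : psh_hom P Z) (f : res_hom X P) : res_hom X Z :=
  @ResHom A X Z (fun n x => g n (f n x))
    (fun m n h p x => etrans (congr1 (g m) (rnat f p x)) (hnat g _ (f n x))).

Definition const_hom (X Z : Aset A) (z : forall n, Z n) (hz : global_section z) :
  psh_hom X Z :=
  @PshHom _ X Z (fun n _ => z n) (fun m n f p x => esym (hz m n f p)).

Lemma L_universal_hom_ext (X : precubical) (P Z : Aset A) (eta : res_hom X P) :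
  L_universal eta -> forall psi1 psi2 : psh_hom P Z,
  (forall n (x : X n), psi1 n (eta n x) = psi2 n (eta n x)) -> hom_eq psi1 psi2.
Proof.
move=> Heta psi1 psi2 E.
by have [_ U] := Heta Z (comp_res_hom psi1 eta); apply: U => n x //=; rewrite E.
Qed.

Lemma sh_universal_hom_ext (P Y Z : Aset A) (eta : psh_hom P Y) :
  sh_universal eta -> orthogonal Z -> forall psi1 psi2 : psh_hom Y Z,
  (forall n (x : P n), psi1 n (eta n x) = psi2 n (eta n x)) -> hom_eq psi1 psi2.
Proof.
move=> [_ Heta] HZ psi1 psi2 E.
by have [_ U] := Heta Z HZ (comp_hom psi1 eta); apply: U => n x //=; rewrite E.
Qed.

Lemma bang_tau_section (Z : Aset A) (phi : res_hom bang_tau Z) m n (f : Hom m n)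
    (p : box f) :
  act Z (box_sub A p) (phi n [tuple of nseq n tt]) = phi m [tuple of nseq m tt].
Proof. by rewrite -rnat; congr (phi m _); apply: unit_tuple_eq. Qed.

Lemma iso_terminal (Y : Aset A) (y : forall n, Y n) (hy : global_section y) :
  (forall n (y' : Y n), y' = y n) -> psh_iso Y (terminal A).
Proof.
move=> Hy; exists (@const_hom Y (terminal A) (fun _ => tt) (fun _ _ _ _ => erefl)).
by exists (const_hom (terminal A) hy); split=> [n y'|n []] //=; rewrite -Hy.
Qed.

End CategoryOfCubes.

Theorem proposition4p25 (A : cube_cat)
    (P : Aset A) (eta1 : res_hom bang_tau P) (H1 : L_universal eta1)
    (Y : Aset A) (eta2 : psh_hom P Y) (H2 : sh_universal eta2) :
  psh_iso Y (terminal A) /\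
  (forall X : Aset A,
      (exists lab : psh_hom X Y, True) /\
      (forall lab1 lab2 : psh_hom X Y, hom_eq lab1 lab2)).
Proof.
have HYo : orthogonal Y := H2.1.
pose y n : Y n := eta2 n (eta1 n [tuple of nseq n tt]).
have hy : global_section y.
  apply: orthogonal_global_section => // m n f p.
  by rewrite /y -hnat bang_tau_section.
have eta2_const : hom_eq eta2 (const_hom P hy).
  apply: L_universal_hom_ext H1 _ _ _ => n x /=.
  by rewrite /y; congr (eta2 n (eta1 n _)); apply: unit_tuple_eq.
have Y_const : forall n (y' : Y n), y' = y n.
  exact: (sh_universal_hom_ext H2 HYo (psi1 := id_hom Y) (psi2 := const_hom Y hy) eta2_const).
split; first exact: iso_terminal hy Y_const.
move=> X; split; first by exists (const_hom X hy).
by move=> lab1 lab2 n x; rewrite (Y_const _ (lab1 n x)) (Y_const _ (lab2 n x)).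
Qed.
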